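(* Let $G=(U,\alpha)$ and $H=(V,\beta)$ be graphs and let $K=(U\times V,\gamma)$ be a graph. Then $K$ is a graph joining of $G$ and $H$ if and only if $G\mid K$ under $\pi_1$ and $H\mid K$ under $\pi_2$, where $\pi_1(u,v)=u$ and $\pi_2(u,v)=v$.
   Context: A weight function on finite $U$ is $\alpha:U\times U\to\mathbb{R}$, $\alpha\ge0$, symmetric, summing to $1$; degree $p(u)=\sum_{u'}\alpha(u,u')$; a graph is $(U,\alpha)$. For $G=(U,\alpha)$, $H=(V,\beta)$ with degrees $p,q$, a weight joining is a weight function $\gamma$ on $U\times V$ with degree $r(u,v)=\sum_{(u',v')}\gamma((u,v),(u',v'))$ such that $\sum_v r(u,v)=p(u)$, $\sum_u r(u,v)=q(v)$, $p(u)\sum_{\tilde v}\gamma((u,v),(u',\tilde v))=\alpha(u,u')r(u,v)$ and $q(v)\sum_{\tilde u}\gamma((u,v),(\tilde u,v'))=\beta(v,v')r(u,v)$ for all $u,u',v,v'$; a graph joining of $G,H$ is $(U\times V,\gamma)$ with $\gamma$ a weight joining. For graphs $G=(U,\alpha)$, $H=(V,\beta)$ with degrees $p,q$, $H\mid G$ under a surjective map $\phi:U\to V$ means (i) $q(v)=\sum_{u\in\phi^{-1}(v)}p(u)$ for all $v$, and (ii) $q(v)\sum_{u'\in\phi^{-1}(v')}\alpha(u,u')=p(u)\beta(v,v')$ for all $v,v'\in V$ and all $u\in\phi^{-1}(v)$. *)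

From mathcomp Require Import all_boot all_order all_algebra.
Set Implicit Arguments. Unset Strict Implicit. Unset Printing Implicit Defensive.
Import Order.TTheory GRing.Theory Num.Theory.
Local Open Scope ring_scope.

Definition weight_fun (R : realFieldType) (U : finType) (a : U -> U -> R) : Prop :=
  [/\ (forall u u', 0 <= a u u'),
      (forall u u', a u u' = a u' u) &
      \sum_(u : U) \sum_(u' : U) a u u' = 1].

Definition deg (R : realFieldType) (U : finType) (a : U -> U -> R) (u : U) : R :=
  \sum_(u' : U) a u u'.

Definition weight_joining (R : realFieldType) (U V : finType)
  (a : U -> U -> R) (b : V -> V -> R) (g : (U * V)%type -> (U * V)%type -> R) : Prop :=
  [/\ weight_fun g,
      (forall u, \sum_(v : V) deg g (u, v) = deg a u),
      (forall v, \sum_(u : U) deg g (u, v) = deg b v),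
      (forall u u' v, deg a u * (\sum_(vt : V) g (u, v) (u', vt)) = a u u' * deg g (u, v)) &
      (forall u v v', deg b v * (\sum_(ut : U) g (u, v) (ut, v')) = b v v' * deg g (u, v))].

(* H = (V,b) | G = (U,a) under the surjective map phi : U -> V. *)
Definition graph_divides (R : realFieldType) (U V : finType)
  (b : V -> V -> R) (a : U -> U -> R) (phi : U -> V) : Prop :=
  [/\ (forall v, exists u, phi u = v),
      (forall v, deg b v = \sum_(u | phi u == v) deg a u) &
      (forall v v' u, phi u = v ->
         deg b v * (\sum_(u' | phi u' == v') a u u') = deg a u * b v v')].

From mathcomp Require Import all_boot all_order all_algebra.
Set Implicit Arguments. Unset Strict Implicit. Unset Printing Implicit Defensive.
Import GRing.Theory.
Local Open Scope ring_scope.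

(** Both directions reduce to one observation: summing over the fibre of a
    projection of [U * V] is summing over the other coordinate.  Under this
    identification the marginal and compatibility conditions of a weight
    joining are literally conditions (i) and (ii) of the two divisibilities,
    while surjectivity of the projections holds because a weight function
    with total mass [1] lives on a nonempty vertex set. *)

Section FibreSums.

Variables (R : Type) (idx : R) (op : Monoid.com_law idx) (I J : finType).
Implicit Type F : (I * J)%type -> R.

Lemma big_fst_fibre F i :
  \big[op/idx]_(p | p.1 == i) F p = \big[op/idx]_(j : J) F (i, j).
Proof.
rewrite -(big_pred1_eq op i (fun i' => \big[op/idx]_(j : J) F (i', j))).
by rewrite pair_big /=; apply: eq_big => [[i' j]|[i' j]] //=; rewrite andbT.
Qed.

Lemma big_snd_fibre F j :
  \big[op/idx]_(p | p.2 == j) F p = \big[op/idx]_(i : I) F (i, j).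
Proof.
under [RHS]eq_bigr do rewrite -(big_pred1_eq op j (fun j' => F (_, j'))).
by rewrite pair_big /=; apply: eq_big => [[i j']|[i j']] //=.
Qed.

End FibreSums.

Lemma weight_fun_card_gt0 (R : realFieldType) (U : finType) (a : U -> U -> R) :
  weight_fun a -> (0 < #|U|)%N.
Proof.
case=> _ _ mass1; rewrite lt0n; apply: contra_eq_neq mass1 => /card0_eq U0.
by rewrite big_pred0 => [|u]; [rewrite eq_sym oner_eq0 | exact: U0].
Qed.

Section ProjectionDivisibility.

Variables (R : realFieldType) (U V : finType).
Variables (a : U -> U -> R) (b : V -> V -> R) (g : (U * V)%type -> (U * V)%type -> R).

Lemma graph_divides_fstP (v0 : V) :
  graph_divides a g (@fst U V) <->
  (forall u, \sum_(v : V) deg g (u, v) = deg a u) /\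
  (forall u u' v, deg a u * (\sum_(vt : V) g (u, v) (u', vt)) = a u u' * deg g (u, v)).
Proof.
split=> [[_ marg compat] | [marg compat]].
  split=> [u | u u' v]; first by rewrite marg big_fst_fibre.
  by rewrite -big_fst_fibre (compat _ _ (u, v)) // mulrC.
split=> [u | u | u u' [x v] /= <-]; first by exists (u, v0).
  by rewrite big_fst_fibre marg.
by rewrite big_fst_fibre compat mulrC.
Qed.

Lemma graph_divides_sndP (u0 : U) :
  graph_divides b g (@snd U V) <->
  (forall v, \sum_(u : U) deg g (u, v) = deg b v) /\
  (forall u v v', deg b v * (\sum_(ut : U) g (u, v) (ut, v')) = b v v' * deg g (u, v)).
Proof.
split=> [[_ marg compat] | [marg compat]].
  split=> [v | u v v']; first by rewrite marg big_snd_fibre.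
  by rewrite -big_snd_fibre (compat _ _ (u, v)) // mulrC.
split=> [v | v | v v' [u y] /= <-]; first by exists (u0, v).
  by rewrite big_snd_fibre marg.
by rewrite big_snd_fibre compat mulrC.
Qed.

End ProjectionDivisibility.

Theorem proposition4p2 (R : realFieldType) (U V : finType)
  (a : U -> U -> R) (b : V -> V -> R) (g : (U * V)%type -> (U * V)%type -> R) :
  weight_fun a -> weight_fun b -> weight_fun g ->
  (weight_joining a b g <->
   (graph_divides a g (@fst U V) /\ graph_divides b g (@snd U V))).
Proof.
move=> /weight_fun_card_gt0/card_gt0P[u0 _] /weight_fun_card_gt0/card_gt0P[v0 _] wg.
split=> [[_ margU margV compatU compatV] | [divU divV]].
  by split; [apply/(graph_divides_fstP _ _ v0) | apply/(graph_divides_sndP _ _ u0)].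
have [margU compatU] := (graph_divides_fstP a g v0).1 divU.
have [margV compatV] := (graph_divides_sndP b g u0).1 divV.
by split.
Qed.
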